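(* $f_3(5,3)=\frac{15}{8}=\rho_3(C_5\vee I_3)$, where $C_5\vee I_3$ is the join of the $5$-cycle with an independent set of $3$ vertices.
   Context: $\mathcal{G}(\Delta,\omega)$ denotes the class of finite simple graphs $G$ with maximum degree $\Delta(G)\le\Delta$ and clique number $\omega(G)\le\omega$. $k_t(G)$ is the number of copies of $K_t$ in $G$ and $\rho_t(G)=k_t(G)/|V(G)|$. $f_t(\Delta,\omega)=\sup\{\rho_t(G): G\in\mathcal{G}(\Delta,\omega),\ |V(G)|\ge 1\}$. The join $A\vee B$ of two vertex-disjoint graphs is their disjoint union together with all edges between $V(A)$ and $V(B)$. *)

From HB Require Import structures.
From mathcomp Require Import all_boot all_order all_algebra.
Set Implicit Arguments. Unset Strict Implicit. Unset Printing Implicit Defensive.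
Import Order.TTheory GRing.Theory Num.Theory.

Definition simple_graph (T : finType) (e : rel T) : Prop :=
  symmetric e /\ irreflexive e.

Definition deg (T : finType) (e : rel T) (x : T) : nat := #|[set y | e x y]|.

Definition is_clique (T : finType) (e : rel T) (S : {set T}) : bool :=
  [forall x in S, forall y in S, (x != y) ==> e x y].

Definition k_t (T : finType) (e : rel T) (t : nat) : nat :=
  #|[set S : {set T} | is_clique e S && (#|S| == t)]|.

Definition rho_t (T : finType) (e : rel T) (t : nat) : rat :=
  ((k_t e t)%:R / (#|T|)%:R)%R.

Definition in_class (T : finType) (e : rel T) (Delta omega : nat) : Prop :=
  simple_graph e /\ (forall x, deg e x <= Delta) /\
  (forall S : {set T}, is_clique e S -> #|S| <= omega).

(* "f_t(Delta,omega) = x": x is the supremum (least upper bound) of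
   { rho_t(G) : G in G(Delta,omega), |V(G)| >= 1 }. *)
Definition is_f_value (t Delta omega : nat) (x : rat) : Prop :=
  (forall (T : finType) (e : rel T),
      0 < #|T| -> in_class e Delta omega -> (rho_t e t <= x)%R) /\
  (forall y : rat,
      (forall (T : finType) (e : rel T),
          0 < #|T| -> in_class e Delta omega -> (rho_t e t <= y)%R) ->
      (x <= y)%R).

Definition join_rel (A B : finType) (eA : rel A) (eB : rel B) : rel (A + B)%type :=
  fun u v => match u, v with
             | inl a, inl a' => eA a a'
             | inr b, inr b' => eB b b'
             | _, _ => true
             end.

(* the n-cycle C_n on 'I_n (for n >= 3) *)
Definition cycle_rel (n : nat) : rel 'I_n :=
  fun i j => (val j == (val i).+1 %% n) || (val i == (val j).+1 %% n).

Definition empty_rel (n : nat) : rel 'I_n := fun _ _ => false.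

Definition C5_join_I3 : rel ('I_5 + 'I_3)%type := join_rel (@cycle_rel 5) (@empty_rel 3).

From HB Require Import structures.
From mathcomp Require Import all_boot all_order all_algebra.
Import Order.TTheory GRing.Theory Num.Theory.
From mathcomp Require Import zify.
Set Implicit Arguments. Unset Strict Implicit. Unset Printing Implicit Defensive.

(* Let G have maximum degree at most 5 and no K4, and let t(v) be the number of
   triangles through v.  Inside N(v) the graph is triangle-free, so adjacent
   u, x in N(v) have disjoint common neighbourhoods with v, and with c(u) the
   number of common neighbours of u and v the identity
     12 d(v) = 10 t(v) + sum_{ux edge in N(v)} (5 - c(u) - c(x)) + 2 sum_u (c(u)-2)(c(u)-3)
   gives t(v) <= 6, with equality only if d(v) = 5 and c takes the value 2
   exactly three times.  Such a neighbour u cannot itself have t(u) = 6: a common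
   neighbour a of u and v would then have three common neighbours with each of
   u and v, six in all.  So each vertex with t = 6 has three neighbours with
   t <= 5; counting edges gives 3 |A| <= 5 (n - |A|) for the set A of such
   vertices, whence 3 k_3 = sum t <= 5 n + |A| <= 45 n / 8.  The bound 15/8 is
   attained by C5 v I3, whose cycle vertices lie in 6 triangles and whose other
   vertices in 5. *)

Lemma card_sum_mem (T : finType) (A : {pred T}) : #|A| = \sum_x (x \in A).
Proof. by rewrite -sum1_card big_mkcond; apply: eq_bigr => x _; case: (x \in A). Qed.

Definition K4_free (T : finType) (e : rel T) : Prop :=
  forall a b c d, e a b -> e a c -> e a d -> e b c -> e b d -> e c d -> False.

Section SimpleGraph.
Variables (T : finType) (e : rel T).
Hypotheses (esym : symmetric e) (eirr : irreflexive e).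

Local Notation N x := [set y | e x y].

Definition codeg x y := #|N x :&: N y|.
Definition triangles := [set S : {set T} | is_clique e S && (#|S| == 3)].
Definition triangles_at v := #|[set S in triangles | v \in S]|.

Lemma codegC x y : codeg x y = codeg y x.
Proof. by rewrite /codeg setIC. Qed.

Lemma codegE x y : codeg x y = \sum_(z in N x) e y z.
Proof.
rewrite /codeg card_sum_mem [RHS]big_mkcond /=; apply: eq_bigr => z _.
by rewrite !inE (esym y z); case: (e x z).
Qed.

Lemma adj_neq x y : e x y -> x != y.
Proof. by apply: contraTneq => ->; rewrite eirr. Qed.

Lemma clique_adj S x y : is_clique e S -> x \in S -> y \in S -> x != y -> e x y.
Proof. by move=> /forall_inP/(_ x) cl xS yS; move: (cl xS) => /forall_inP/(_ y yS)/implyP. Qed.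

Lemma triangle_in_triangles v u w :
  e v u -> e v w -> e u w -> [set v; u; w] \in triangles.
Proof.
move=> vu vw uw; rewrite inE; apply/andP; split.
  apply/forall_inP => x; rewrite !inE; move=> /orP[/orP[]|] /eqP->;
  apply/forall_inP => y; rewrite !inE; move=> /orP[/orP[]|] /eqP->; rewrite ?eqxx //=;
  by apply/implyP => _; rewrite ?vu ?vw ?uw // esym ?vu ?vw ?uw.
rewrite setUC cardsU1 cards2 !inE.
by rewrite ![w == _]eq_sym (negPf (adj_neq vu)) (negPf (adj_neq vw)) (negPf (adj_neq uw)).
Qed.

Lemma card_triangles_at_edge v u : e v u ->
  #|[set S in triangles | (v \in S) && (u \in S)]| = codeg v u.
Proof.
move=> vu.
have -> : [set S in triangles | (v \in S) && (u \in S)] =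
          [set [set v; u; w] | w in N v :&: N u].
  apply/setP => S; rewrite inE; apply/idP/idP.
    case/andP => /[!inE] /andP[cl /eqP S3] /andP[vS uS].
    have uv : u != v by rewrite eq_sym adj_neq.
    have uS' : u \in S :\ v by rewrite !inE uv.
    have /cards1P[w Sw] : #|S :\ v :\ u| == 1.
      by move: S3; rewrite (cardsD1 v) vS (cardsD1 u) uS' !add1n => -[->].
    have : w \in S :\ v :\ u by rewrite Sw inE.
    rewrite !inE => /and3P[wu wv wS].
    apply/imsetP; exists w; first by rewrite !inE !(clique_adj cl) // eq_sym.
    by rewrite -(setD1K vS) -(setD1K uS') Sw setUA.
  case/imsetP => w /[!inE] /andP[vw uw] ->.
  by move: (triangle_in_triangles vu vw uw); rewrite inE => ->; rewrite !inE !eqxx ?orbT.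
rewrite card_in_imset // => w1 w2 /[!inE] /andP[vw1 uw1] _ w12.
have : w1 \in [set v; u; w2] by rewrite -w12 !inE eqxx !orbT.
by rewrite !inE => /orP[/orP[]|] /eqP w1E //; [move: vw1 | move: uw1]; rewrite w1E eirr.
Qed.

Lemma sum_codeg_nbr v : \sum_(u in N v) codeg v u = 2 * triangles_at v.
Proof.
rewrite /triangles_at mulnC -sum_nat_const.
rewrite (eq_bigr (fun S : {set T} => \sum_(u in N v) (u \in S))); last first.
  move=> S /[!inE] /andP[/andP[cl /eqP S3] vS].
  have <- : #|S :\ v| = 2 by move: S3; rewrite (cardsD1 v) vS => -[].
  rewrite card_sum_mem [RHS]big_mkcond /=; apply: eq_bigr => u _.
  rewrite !inE; have [->|uv] /= := eqVneq u v; first by rewrite eirr.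
  case uS: (u \in S) => /=; last by case: (e v u).
  by rewrite (clique_adj cl) // eq_sym.
rewrite exchange_big /=; apply: eq_bigr => u /[!inE] vu.
rewrite -(card_triangles_at_edge vu) card_sum_mem [RHS]big_mkcond /=.
apply: eq_bigr => S _; rewrite !inE.
by case: (is_clique e S && _); case: (v \in S); case: (u \in S).
Qed.

Lemma sum_triangles_at : \sum_v triangles_at v = 3 * #|triangles|.
Proof.
rewrite (eq_bigr (fun v => \sum_(S in triangles) (v \in S))); last first.
  move=> v _; rewrite /triangles_at card_sum_mem [RHS]big_mkcond /=.
  by apply: eq_bigr => S _; rewrite inE; case: (S \in triangles).
rewrite exchange_big /= mulnC -sum_nat_const; apply: eq_bigr => S.
by rewrite inE => /andP[_ /eqP <-]; rewrite card_sum_mem.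
Qed.

Lemma K4_free_codeg_le a b c : K4_free e -> e a b -> e a c -> e b c ->
  codeg a b + codeg a c <= #|N a|.
Proof.
move=> K4 ab ac bc.
have disj : (N a :&: N b) :&: (N a :&: N c) = set0.
  apply/setP => y; rewrite !inE; apply/negP => /andP[/andP[ay by_] /andP[_ cy]].
  exact: (K4 _ _ _ _ ab ac ay bc by_ cy).
rewrite /codeg -[X in X <= _]subn0 -(cards0 T) -disj -cardsU.
by apply: subset_leq_card; apply/subsetP => y; rewrite !inE => /orP[]/andP[].
Qed.

Lemma clique_le3_K4_free :
  (forall S : {set T}, is_clique e S -> #|S| <= 3) -> K4_free e.
Proof.
move=> cl3 a b c d ab ac ad bc bd cd.
suff : is_clique e [set a; b; c; d].
  move/cl3; rewrite setUC cardsU1 setUC cardsU1 cards2 !inE.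
  rewrite ![d == _]eq_sym ![c == _]eq_sym [d == c]eq_sym.
  by rewrite !(negPf (adj_neq _)).
apply/forall_inP => x; rewrite !inE => /orP[/orP[/orP[]|]|] /eqP->;
apply/forall_inP => y; rewrite !inE => /orP[/orP[/orP[]|]|] /eqP->;
rewrite ?eqxx //=; apply/implyP => _;
by rewrite ?ab ?ac ?ad ?bc ?bd ?cd // esym ?ab ?ac ?ad ?bc ?bd ?cd.
Qed.

Lemma K4_free_clique_le3 S : K4_free e -> is_clique e S -> #|S| <= 3.
Proof.
move=> K4 cl; rewrite leqNgt cardE; apply/negP.
have inS x : x \in enum S -> x \in S by rewrite mem_enum.
move: (enum_uniq (mem S)) inS; case: (enum S) => [|a [|b [|c [|d s]]]] //= uniqS inS _.
have adj x y : x \in [:: a, b, c, d & s] -> y \in [:: a, b, c, d & s] -> x != y -> e x y.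
  by move=> xS yS; apply: clique_adj cl (inS _ xS) (inS _ yS).
move: uniqS; rewrite !inE !negb_or => /and4P[/and4P[ab ac ad _] /and3P[bc bd _] /andP[cd _] _].
by apply: (K4 a b c d); apply: adj; rewrite ?inE ?eqxx ?orbT.
Qed.

Lemma discharging (A : {set T}) k D :
  (forall v, v \in A -> k <= #|N v :&: ~: A|) -> (forall w, deg e w <= D) ->
  k * #|A| <= D * #|~: A|.
Proof.
move=> kA degD; rewrite mulnC -sum_nat_const.
apply: (@leq_trans (\sum_(v in A) #|N v :&: ~: A|)); first exact: leq_sum.
rewrite (eq_bigr (fun v => \sum_(w in ~: A) e v w)); last first.
  move=> v _; rewrite card_sum_mem [RHS]big_mkcond /=; apply: eq_bigr => w _.
  by rewrite !inE; case: (e v w); case: (w \in A).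
rewrite exchange_big /= mulnC -sum_nat_const; apply: leq_sum => w _.
apply: leq_trans (degD w); rewrite /deg card_sum_mem big_mkcond /=.
by apply: leq_sum => v _; rewrite inE esym; case: (v \in A).
Qed.

End SimpleGraph.

Section MaxDegreeFiveK4Free.
Variables (T : finType) (e : rel T).
Hypotheses (esym : symmetric e) (eirr : irreflexive e).
Hypotheses (deg_le5 : forall x, deg e x <= 5) (K4 : K4_free e).

Local Notation N x := [set y | e x y].
Local Notation codeg := (codeg e).
Local Notation triangles_at := (triangles_at e).

Lemma codeg_triangle_le5 v u x : e v u -> e v x -> e u x -> codeg v u + codeg v x <= 5.
Proof. by move=> vu vx ux; apply: leq_trans (deg_le5 v); apply: K4_free_codeg_le. Qed.

Definition edge_slack v :=
  \sum_(u in N v) \sum_(x in N v) e u x * (5 - (codeg v u + codeg v x)).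
Definition codeg_slack v := \sum_(u in N v) (codeg v u * codeg v u + 6 - 5 * codeg v u).

Lemma triangles_at_identity v :
  12 * #|N v| = 10 * triangles_at v + edge_slack v + 2 * codeg_slack v.
Proof.
set P := \sum_(u in N v) codeg v u.
have P2t : P = 2 * triangles_at v by rewrite /P sum_codeg_nbr.
set Q := \sum_(u in N v) codeg v u * codeg v u.
have Q_l : Q = \sum_(u in N v) \sum_(x in N v) e u x * codeg v u.
  by apply: eq_bigr => u _; rewrite {1}codegE // big_distrl.
have Q_r : Q = \sum_(u in N v) \sum_(x in N v) e u x * codeg v x.
  rewrite Q_l exchange_big /=; apply: eq_bigr => x _; apply: eq_bigr => u _.
  by rewrite esym.
have edge_eq : 2 * Q + edge_slack v = 5 * P.
  rewrite mul2n -addnn {1}Q_l Q_r -!big_split /= /P big_distrr /=.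
  apply: eq_bigr => u /[!inE] vu; rewrite [in RHS]codegE // big_distrr -!big_split /=.
  apply: eq_bigr => x /[!inE] vx; case ux: (e u x) => //=.
  by have := codeg_triangle_le5 vu vx ux; lia.
have codeg_eq : Q + 6 * #|N v| = 5 * P + codeg_slack v.
  rewrite mulnC -sum_nat_const /P /codeg_slack big_distrr -!big_split /=.
  (* (c - 2) (c - 3) >= 0 on the integers *)
  by apply: eq_bigr => u _; case: (codeg v u) => [|[|[|c]]] //; nia.
lia.
Qed.

Lemma triangles_at_le6 v : triangles_at v <= 6.
Proof. by have := triangles_at_identity v; have := deg_le5 v; rewrite /deg; lia. Qed.

Section SaturatedVertex.
Variable v : T.
Hypothesis v6 : triangles_at v = 6.

Lemma saturated_slack : [/\ #|N v| = 5, edge_slack v = 0 & codeg_slack v = 0].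
Proof. by have := triangles_at_identity v; have := deg_le5 v; rewrite /deg v6; split; lia. Qed.

Lemma saturated_codeg_edge u x : e v u -> e v x -> e u x -> codeg v u + codeg v x = 5.
Proof.
move=> vu vx ux; have [_ /eqP + _] := saturated_slack.
rewrite sum_nat_eq0 => /forall_inP/(_ u); rewrite inE => /(_ vu)/eqP/eqP.
rewrite sum_nat_eq0 => /forall_inP/(_ x); rewrite inE => /(_ vx)/eqP.
by rewrite ux mul1n; have := codeg_triangle_le5 vu vx ux; lia.
Qed.

Lemma saturated_codeg u : e v u -> codeg v u = 2 \/ codeg v u = 3.
Proof.
move=> vu; have [_ _ /eqP] := saturated_slack.
rewrite sum_nat_eq0 => /forall_inP/(_ u); rewrite inE => /(_ vu)/eqP.
case: (codeg v u) => [|[|[|[|c]]]] //=; [by left | by right | nia].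
Qed.

Lemma saturated_three_codeg2 : 3 <= #|[set u in N v | codeg v u == 2]|.
Proof.
have -> : #|[set u in N v | codeg v u == 2]| = \sum_(u in N v) (3 - codeg v u).
  rewrite card_sum_mem [RHS]big_mkcond /=; apply: eq_bigr => u _; rewrite !inE.
  by case vu: (e v u) => //=; case: (saturated_codeg vu) => ->.
have sum3 : \sum_(u in N v) (3 - codeg v u) + \sum_(u in N v) codeg v u = #|N v| * 3.
  rewrite -big_split -sum_nat_const /=; apply: eq_bigr => u /[!inE] vu.
  by case: (saturated_codeg vu) => ->.
have [N5 _ _] := saturated_slack; move: sum3; rewrite sum_codeg_nbr // v6 N5; lia.
Qed.

End SaturatedVertex.

Lemma saturated_codeg2_nbr v u :
  triangles_at v = 6 -> e v u -> codeg v u = 2 -> triangles_at u < 6.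
Proof.
move=> v6 vu vu2; rewrite ltn_neqAle triangles_at_le6 andbT; apply/eqP => u6.
have /card_gt0P[a] : 0 < codeg v u by rewrite vu2.
rewrite !inE => /andP[va ua].
have [uv av au] : [/\ e u v, e a v & e a u] by rewrite !(esym _ v) (esym a u).
have va3 : codeg v a = 3 by have := saturated_codeg_edge v6 vu va ua; lia.
have ua3 : codeg u a = 3.
  have := saturated_codeg_edge u6 uv ua va.
  by rewrite codegC // vu2; lia.
have := K4_free_codeg_le K4 av au vu.
by have := deg_le5 a; rewrite /deg codegC // (codegC _ a u) // va3 ua3; lia.
Qed.

Lemma sum_triangles_at_le : 8 * \sum_v triangles_at v <= 45 * #|T|.
Proof.
set A := [set v | triangles_at v == 6].
have A_out : forall v, v \in A -> 3 <= #|N v :&: ~: A|.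
  move=> v /[!inE] /eqP v6; apply: leq_trans (saturated_three_codeg2 v6) _.
  apply: subset_leq_card; apply/subsetP => u /[!inE] /andP[vu /eqP vu2].
  by rewrite vu neq_ltn (saturated_codeg2_nbr v6 vu vu2).
have cardA := discharging esym A_out deg_le5.
have sum_le : \sum_v triangles_at v <= 6 * #|A| + 5 * #|~: A|.
  rewrite (bigID (mem A)) /= [6 * _]mulnC [5 * _]mulnC -!sum_nat_const; apply: leq_add.
    by apply: leq_sum => v /[!inE] /eqP ->.
  rewrite (eq_bigl (mem (~: A))) => [|v]; last by rewrite !inE.
  by apply: leq_sum => v /[!inE] v6; have := triangles_at_le6 v; lia.
by have := cardsC A; lia.
Qed.

End MaxDegreeFiveK4Free.

Lemma k3_le_in_class (T : finType) (e : rel T) :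
  in_class e 5 3 -> 8 * k_t e 3 <= 15 * #|T|.
Proof.
move=> [[esym eirr] [deg5 cl3]].
have := sum_triangles_at_le esym eirr deg5 (clique_le3_K4_free esym eirr cl3).
by rewrite sum_triangles_at /k_t -/(triangles e); lia.
Qed.

Lemma ler_ratio_nat (R : numFieldType) (a b c d : nat) : 0 < b -> 0 < d ->
  a * d <= c * b -> (a%:R / b%:R <= c%:R / d%:R :> R)%R.
Proof.
move=> b0 d0 le_ad_cb.
by rewrite ler_pdivrMr ?ltr0n // mulrAC ler_pdivlMr ?ltr0n // -!natrM ler_nat.
Qed.

Local Notation C := C5_join_I3.

Lemma C5_join_I3_sym : symmetric C.
Proof. by move=> [i|i] [j|j] //=; rewrite /cycle_rel orbC. Qed.

Lemma C5_join_I3_irr : irreflexive C.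
Proof. by move=> [[[|[|[|[|[|i]]]]] ?]|[[|[|[|i]]] ?]]. Qed.

Lemma cycle5_triangle_free (i j k : 'I_5) :
  cycle_rel i j -> cycle_rel j k -> cycle_rel i k -> False.
Proof.
by case: i => [[|[|[|[|[|i]]]]] ?]; case: j => [[|[|[|[|[|j]]]]] ?];
   case: k => [[|[|[|[|[|k]]]]] ?].
Qed.

(* I3 has no edges, so a K4 of the join would put a triangle in C5. *)
Lemma C5_join_I3_K4_free : K4_free C.
Proof.
case=> a [] b [] c [] d //= ab ac ad bc bd cd;
  first [exact: (cycle5_triangle_free ab bc ac) | exact: (cycle5_triangle_free ab bd ad)
        | exact: (cycle5_triangle_free ac cd ad) | exact: (cycle5_triangle_free bc cd bd)].
Qed.

Lemma C5_join_I3_deg x : deg C x <= 5.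
Proof.
rewrite /deg card_sum_mem; under eq_bigr do rewrite inE.
rewrite big_sumType /= !big_ord_recl !big_ord0.
by case: x => [[[|[|[|[|[|i]]]]] ?]|[[|[|[|i]]] ?]] //; vm_compute.
Qed.

Lemma C5_join_I3_in_class : in_class C 5 3.
Proof.
split; first by split; [exact: C5_join_I3_sym | exact: C5_join_I3_irr].
split; first exact: C5_join_I3_deg.
by move=> S; apply: K4_free_clique_le3 C5_join_I3_K4_free.
Qed.

Lemma C5_join_I3_triangles_at v : triangles_at C v = if v is inl _ then 6 else 5.
Proof.
apply/eqP; rewrite -(eqn_pmul2l (isT : 0 < 2)) -sum_codeg_nbr;
  [| exact: C5_join_I3_sym | exact: C5_join_I3_irr].
rewrite big_mkcond (eq_bigr (fun u => C v u * \sum_w (C v w && C u w))) => [|u _].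
  rewrite big_sumType /= !big_ord_recl !big_ord0 /= !big_sumType /= !big_ord_recl !big_ord0.
  by case: v => [[[|[|[|[|[|i]]]]] ?]|[[|[|[|i]]] ?]] //; vm_compute.
rewrite inE /codeg card_sum_mem; case: (C v u) => //=.
by rewrite mul1n; apply: eq_bigr => w _; rewrite !inE.
Qed.

Lemma C5_join_I3_k3 : k_t C 3 = 15.
Proof.
apply/eqP; rewrite -(eqn_pmul2l (isT : 0 < 3)) -sum_triangles_at big_sumType /=.
by under eq_bigr do rewrite C5_join_I3_triangles_at;
   under [X in _ + X]eq_bigr do rewrite C5_join_I3_triangles_at;
   rewrite !sum_nat_const !card_ord.
Qed.

Lemma rho3_C5_join_I3 : rho_t C 3 = (15%:R / 8%:R)%R.
Proof. by rewrite /rho_t C5_join_I3_k3 card_sum !card_ord. Qed.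

Theorem mainTheorem17 :
  is_f_value 3 5 3 (15%:R / 8%:R)%R /\
  rho_t C5_join_I3 3 = (15%:R / 8%:R)%R.
Proof.
split; last exact: rho3_C5_join_I3.
split=> [T e T0 eG | y ub].
  by apply: ler_ratio_nat; rewrite // mulnC k3_le_in_class.
by rewrite -rho3_C5_join_I3; apply: ub C5_join_I3_in_class; rewrite card_sum !card_ord.
Qed.
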